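(* A gentle quiver $(\Delta,R)$ is of tree type (i.e. $|\Delta_0|=|\Delta_1|+1$) if and only if $f_{(\Delta,R)}=[p+2,\,p]$ for some $p\in\mathbb N$.
   Context: A quiver $\Delta$ has finite vertex set $\Delta_0$, arrow set $\Delta_1$, maps $s,t$. A path of length $n\ge1$ is $(\alpha_1,\dots,\alpha_n)$ with $s\alpha_i=t\alpha_{i+1}$. A gentle quiver is $(\Delta,R)$ with $\Delta$ connected, $R$ a set of paths of length 2, such that: (1) each vertex is start of at most two arrows and end of at most two arrows; (2) for each arrow $\alpha$ at most one $\beta$ with $s\beta=t\alpha$, $(\beta,\alpha)\notin R$ and at most one $\gamma$ with $t\gamma=s\alpha$, $(\alpha,\gamma)\notin R$; (3) for each $\alpha$ at most one $\beta$ with $(\beta,\alpha)\in R$ and at most one $\gamma$ with $(\alpha,\gamma)\in R$; (4) for some $n$ every path of length $n$ has a subpath in $R$. Invariant $f_{(\Delta,R)}:\mathbb N^2\to\mathbb N$: choose $\sigma,\tau:\Delta_1\to\{\pm1\}$ with distinct arrows of same start having opposite $\sigma$, distinct arrows of same end opposite $\tau$, and for $s\alpha=t\beta$: $(\alpha,\beta)\in R$ iff $\sigma\alpha=\tau\beta$; $\sigma\omega=\sigma\alpha_n,\tau\omega=\tau\alpha_1$. Permitted paths: no consecutive pair in $R$, plus trivial $1_{x,\varepsilon}$ ($s=t=x$, $\sigma=\varepsilon,\tau=-\varepsilon$); maximal if no arrow $\alpha$ with $s\alpha=t\omega,\sigma\alpha=-\tau\omega$ and no $\beta$ with $t\beta=s\omega,\tau\beta=-\sigma\omega$;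 set $\mathcal M$. Antipaths: all consecutive pairs in $R$, plus trivial $1'_{x,\varepsilon}$ ($\sigma=\tau=\varepsilon$); maximal if no $\alpha$ with $s\alpha=t\omega,\sigma\alpha=\tau\omega$ and no $\beta$ with $t\beta=s\omega,\tau\beta=\sigma\omega$; set $\mathcal N$. $\phi:\mathcal M\to\mathcal N$, $\omega\mapsto$ unique $\omega'$ with $t\omega'=t\omega,\tau\omega'=-\tau\omega$; $\psi:\mathcal N\to\mathcal M$, $\omega\mapsto$ unique $\omega'$ with $s\omega'=s\omega,\sigma\omega'=-\sigma\omega$; $\Phi=\phi\psi$; $\Phi$-orbit: $p=|\mathcal O|$, $q=$ total length. $\mathcal C$: arrows $\alpha$ with $(\alpha)$ not a subpath of a maximal antipath; $\Psi(\alpha)=$ unique $\beta\in\mathcal C$ with $t\beta=s\alpha,\tau\beta=\sigma\alpha$; $\Psi$-orbit: $p=0$, $q=|\mathcal O|$. $f(p,q)=$ number of orbits with these values. $[p,q]$ is the characteristic function of $\{(p,q)\}$. *)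

From HB Require Import structures.
From mathcomp Require Import all_boot.
From mathcomp Require Import finmap.
From mathcomp Require Import boolp classical_sets cardinality.

Set Implicit Arguments.
Unset Strict Implicit.
Unset Printing Implicit Defensive.

Section GentleQuiver.

(* R : rel A is the set of relations: R a b means the length-2 path (a,b)
   (with s a = t b, i.e. "first b then a") belongs to R. *)
Variables (V A : finType) (s t : A -> V) (R : rel A).

Definition adj : rel V :=
  fun u v => [exists a : A, ((s a == u) && (t a == v)) || ((s a == v) && (t a == u))].

Definition connected_quiver : Prop :=
  0 < #|V| /\ forall x y : V, connect adj x y.

(* A path of length n >= 1 is (a_1,...,a_n) with s a_i = t a_(i+1);
   it is encoded as a nonempty sequence a_1 :: [:: a_2; ...; a_n]. *)
Definition is_path (a : A) (l : seq A) : bool := path (fun x y => s x == t y) a l.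

Definition gentle : Prop :=
  connected_quiver /\
  [/\ (forall a b, R a b -> s a = t b),
      (forall x : V, #|[pred a | s a == x]| <= 2 /\ #|[pred a | t a == x]| <= 2),
      (forall al : A, #|[pred b | (s b == t al) && ~~ R b al]| <= 1 /\
                      #|[pred c | (t c == s al) && ~~ R al c]| <= 1),
      (forall al : A, #|[pred b | R b al]| <= 1 /\ #|[pred c | R al c]| <= 1)
    &
      (exists n, 0 < n /\ forall (a : A) (l : seq A), (size l).+1 = n ->
          is_path a l -> ~~ path (fun x y => ~~ R x y) a l)].

(* Signs +1 / -1 are encoded by true / false; -e is ~~ e. *)
Variables (sg tu : A -> bool).

Definition sign_convention : Prop :=
  [/\ (forall a b, a != b -> s a = s b -> sg a != sg b),
      (forall a b, a != b -> t a = t b -> tu a != tu b)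
    & (forall a b, s a = t b -> (R a b <-> sg a = tu b))].

(* Generalized paths: either a trivial path at a vertex x carrying its two
   signs (sigma, tau), or a path of length >= 1 given as (a_1, [a_2..a_n]).
   The trivial permitted path 1_{x,e} is inl (x, e, ~~ e);
   the trivial antipath 1'_{x,e} is inl (x, e, e). *)
Definition gpath := ((V * bool * bool) + (A * seq A))%type.

Definition gs (w : gpath) : V :=
  match w with inl (x, _, _) => x | inr (a, l) => s (last a l) end.
Definition gt (w : gpath) : V :=
  match w with inl (x, _, _) => x | inr (a, _) => t a end.
Definition gsg (w : gpath) : bool :=
  match w with inl (_, e, _) => e | inr (a, l) => sg (last a l) end.
Definition gtu (w : gpath) : bool :=
  match w with inl (_, _, e) => e | inr (a, _) => tu a end.
Definition glen (w : gpath) : nat :=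
  match w with inl _ => 0 | inr (_, l) => (size l).+1 end.
Definition garrows (w : gpath) : seq A :=
  match w with inl _ => [::] | inr (a, l) => a :: l end.

Definition permitted (w : gpath) : bool :=
  match w with
  | inl (_, e1, e2) => e2 == ~~ e1
  | inr (a, l) => path (fun x y => (s x == t y) && ~~ R x y) a l
  end.

Definition antipath (w : gpath) : bool :=
  match w with
  | inl (_, e1, e2) => e2 == e1
  | inr (a, l) => path (fun x y => (s x == t y) && R x y) a l
  end.

Definition max_permitted (w : gpath) : bool :=
  [&& permitted w,
      ~~ [exists al : A, (s al == gt w) && (sg al == ~~ gtu w)] &
      ~~ [exists be : A, (t be == gs w) && (tu be == ~~ gsg w)]].

Definition max_antipath (w : gpath) : bool :=
  [&& antipath w,
      ~~ [exists al : A, (s al == gt w) && (sg al == gtu w)] &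
      ~~ [exists be : A, (t be == gs w) && (tu be == gsg w)]].

Definition Mset : {fset gpath} := fset_set (fun w => max_permitted w : Prop).
Definition Nset : {fset gpath} := fset_set (fun w => max_antipath w : Prop).
Definition Mlist : seq gpath := enum_fset Mset.
Definition Nlist : seq gpath := enum_fset Nset.

(* phi : M -> N and psi : N -> M (the unique element with the property). *)
Definition phi (w : gpath) : gpath :=
  head w [seq w' <- Nlist | (gt w' == gt w) && (gtu w' == ~~ gtu w)].
Definition psi (w : gpath) : gpath :=
  head w [seq w' <- Mlist | (gs w' == gs w) && (gsg w' == ~~ gsg w)].
Definition Phi (w : gpath) : gpath := phi (psi w).

Definition inC (al : A) : bool := ~~ has (fun w => al \in garrows w) Nlist.
Definition Clist : seq A := [seq al <- enum A | inC al].
Definition Psi (al : A) : A :=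
  head al [seq be <- Clist | (t be == s al) && (tu be == sg al)].

End GentleQuiver.

(* Orbits of g : T -> T on the finite (duplicate-free) list l, each orbit
   represented canonically as the sub-list of l it consists of. *)
Definition orbit_in (T : eqType) (l : seq T) (g : T -> T) (x : T) : seq T :=
  [seq y <- l | y \in traject g x (size l)].
Definition orbits_in (T : eqType) (l : seq T) (g : T -> T) : seq (seq T) :=
  undup [seq orbit_in l g x | x <- l].

(* The invariant f_{(Delta,R)} (relative to the chosen sigma, tau):
   number of Phi-orbits O with |O| = p and total length q, plus the number
   of Psi-orbits (p = 0, q = |O|). *)
Definition AGf (V A : finType) (s t : A -> V) (R : rel A) (sg tu : A -> bool)
    (p q : nat) : nat :=
  count (fun O => (size O == p) && (sumn (map (@glen V A) O) == q))
        (orbits_in (Nlist s t R sg tu) (Phi s t R sg tu))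
  + count (fun O => (p == 0) && (size O == q))
        (orbits_in (Clist s t R sg tu) (Psi s t R sg tu)).

Definition charpq (p q : nat) : nat -> nat -> nat :=
  fun a b => ((a == p) && (b == q) : nat).

From mathcomp Require Import all_boot fingroup perm.
From mathcomp Require Import finmap.
From mathcomp Require classical_sets cardinality.
From mathcomp Require Import zify.

(* Every vertex x carries four slots (x, out/in, sign).  The permutation [rho]
   sends a slot occupied by an end of an arrow to the slot of its other end,
   and then turns around the vertex (out e -> in e -> out ~e -> in ~e).
   Without arrows [rho] has one cycle per vertex, and each arrow multiplies it
   by a transposition, which merges two cycles or splits one; along a spanning
   tree every step merges, so a quiver of tree type has a single rho-cycle.
   Along a rho-cycle one alternately walks a maximal antipath w forwards and
   the maximal permitted path psi w backwards, so the cycle visits the final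
   slots of the maximal antipaths in Phi-order, while an arrow of C lies on a
   cycle of in-slots only.  Hence in the tree case C is empty and Phi is
   transitive on N.  Counting gives |N| + |A| = 2|V| (one maximal antipath
   ends at each out-slot not occupied by an arrow) and, when C is empty, the
   maximal antipaths partition the arrows, so their total length is |A|.
   These two counts also give the converse. *)

Set Implicit Arguments.
Unset Strict Implicit.
Unset Printing Implicit Defensive.

Notation opath f := (path (fun x y => f x == Some y)).

Section OptionPath.
Variables (T : eqType) (f : T -> option T).
Local Notation g := (obind f).

Lemma iter_obind_None k : iter k g None = None.
Proof. by elim: k => //= k ->. Qed.

Lemma opath_maximal_unique a l l' : opath f a l -> opath f a l' ->
  f (last a l) = None -> f (last a l') = None -> l = l'.
Proof.
elim: l a l' => [|b l IH] a [|b' l'] //=.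
- by move=> _ /andP[/eqP ->].
- by move=> /andP[/eqP ->].
move=> /andP[/eqP E p] /andP[/eqP E' p'] n n'.
have bb : b' = b by move: E'; rewrite E => -[].
by subst b'; rewrite (IH b l' p p' n n').
Qed.

Lemma opath_traject a l : opath f a l ->
  map Some (a :: l) = traject g (Some a) (size l).+1.
Proof.
elim: l a => [|b l IH] a //= /andP[/eqP E p].
by have := IH b p; rewrite /= => ->; rewrite E.
Qed.

Lemma opath_iter_last a l : opath f a l -> iter (size l) g (Some a) = Some (last a l).
Proof.
elim: l a => [|b l IH] a; first by [].
by move=> /andP[/eqP E p]; rewrite [size (b :: l)]/= iterSr /= E; exact: IH.
Qed.

Lemma opath_iter_mem a l k x : opath f a l -> f (last a l) = None ->
  iter k g (Some a) = Some x -> x \in a :: l.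
Proof.
elim: l a k => [|b l IH] a [|k].
- by move=> _ _ [->]; rewrite mem_head.
- by move=> _ E; rewrite iterSr /= E iter_obind_None.
- by move=> _ _ [->]; rewrite mem_head.
move=> /andP[/eqP E p] n; rewrite iterSr /= E => H.
by rewrite in_cons (IH b k p n H) orbT.
Qed.

Lemma opath_maximal_uniq a l : opath f a l -> f (last a l) = None -> uniq (a :: l).
Proof.
move=> p n; rewrite -(map_inj_uniq (@Some_inj _)) opath_traject //.
rewrite looping_uniq; apply/negP => /loopingP /(_ (size l).+1).
rewrite iterS opath_iter_last //= n => H.
have : None \in map Some (a :: l).
  by rewrite opath_traject // trajectSr mem_rcons in_cons H orbT.
by case/mapP.
Qed.

Lemma opath_suffix a l x : opath f a l -> x \in a :: l ->
  exists l2, opath f x l2 /\ last x l2 = last a l.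
Proof.
elim: l a => [|b l IH] a /=.
  by move=> _; rewrite inE => /eqP ->; exists [::].
move=> /andP[E p]; rewrite in_cons => /orP[/eqP ->|xl].
  by exists (b :: l); rewrite /= E p.
exact: IH.
Qed.

End OptionPath.

Section OptionPathFin.
Variables (T : finType) (f : T -> option T).
Hypothesis f_inj : forall x y z, f x = Some z -> f y = Some z -> x = y.
Local Notation g := (obind f).

Lemma iter_obind_repeat_None a i j : (forall x, f x != Some a) -> i < j ->
  iter i g (Some a) = iter j g (Some a) -> iter j g (Some a) = None.
Proof.
move=> no_pre; elim: i j => [|i IH] [|j] //; rewrite !iterS.
  case Ej: (iter j g (Some a)) => [c|] //= _ E.
  by move: (no_pre c); rewrite -E eqxx.
rewrite ltnS => ij.
case Ei: (iter i g (Some a)) => [c|]; case Ej: (iter j g (Some a)) => [d|] //=.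
case Efd: (f d) => [e|] // Efc.
have cd := f_inj Efc Efd.
by have := IH _ ij; rewrite Ei Ej cd => /(_ erefl).
Qed.

Lemma opath_maximal_of_iter_None k a : iter k g (Some a) = None ->
  exists l, opath f a l /\ f (last a l) = None.
Proof.
elim: k a => [|k IH] a //; rewrite iterSr /=.
case E: (f a) => [b|] H; last by exists [::].
by have [l [p n]] := IH b H; exists (b :: l); rewrite /= E eqxx p.
Qed.

Lemma opath_maximal_exists a : (forall x, f x != Some a) ->
  exists l, opath f a l /\ f (last a l) = None.
Proof.
move=> no_pre; have /trajectP [i lt_i Ei] := looping_order g (Some a).
exact/opath_maximal_of_iter_None/(iter_obind_repeat_None no_pre lt_i).
Qed.

Lemma iter_obind_cancel x i d : (forall k, iter k g (Some x) != None) ->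
  iter (i + d) g (Some x) = iter i g (Some x) -> iter d g (Some x) = Some x.
Proof.
move=> total; elim: i => [|i IH] //; rewrite addSn !iterS.
case Ea: (iter (i + d) g (Some x)) => [c|]; last by move: (total (i + d)); rewrite Ea.
case Eb: (iter i g (Some x)) => [c'|]; last by move: (total i); rewrite Eb.
move=> /= E; apply: IH; rewrite Ea Eb; congr Some.
case Ec: (f c) => [e|]; last by move: (total (i + d).+1); rewrite iterS Ea /= Ec.
by rewrite Ec in E; apply: (f_inj Ec).
Qed.

Lemma iter_obind_periodic x : (forall k, iter k g (Some x) != None) ->
  exists d, iter d.+1 g (Some x) = Some x.
Proof.
move=> total; have /trajectP [i lt_i Ei] := looping_order g (Some x).
exists (fingraph.order g (Some x) - i).-1; rewrite prednK ?subn_gt0 //.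
by apply: (iter_obind_cancel (i := i)); rewrite // subnKC // ltnW.
Qed.

End OptionPathFin.

Lemma mem_fset_set_inj (T : choiceType) (K : finType) (P : T -> bool) (key : T -> K) :
  {in P &, injective key} ->
  forall w, (w \in enum_fset (cardinality.fset_set (fun w => P w : Prop))) = P w.
Proof.
move=> kinj.
pose f w := if P w then Some (key w) else None.
have fin : cardinality.finite_set (fun w => P w : Prop).
  apply: (@cardinality.sub_finite_set _ _
     (classical_sets.preimage f (fun x => x != None : Prop))).
    by move=> w Pw; rewrite /classical_sets.preimage /f /= Pw.
  apply: cardinality.finite_preimage; last exact: cardinality.finite_finset.
  move=> w w'; rewrite !classical_sets.in_setE /classical_sets.preimage /f.
  rewrite /classical_sets.mkset /= => H1 H2.
  have {}H1 : P w by move: H1; case: (P w); rewrite ?eqxx.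
  have {}H2 : P w' by move: H2; case: (P w'); rewrite ?eqxx.
  rewrite H1 H2 => -[]; exact: kinj.
move=> w; have E := cardinality.in_fset_set fin w.
apply/idP/idP => H.
  have H' : w \in cardinality.fset_set (fun w => P w : Prop) by [].
  by rewrite E in H'; exact: (classical_sets.set_mem H').
have H' := @classical_sets.mem_set T (fun w => P w : Prop) w H.
by rewrite -E in H'.
Qed.

Lemma connect_exit (T : finType) (e : rel T) (W : {set T}) x y :
  connect e x y -> x \in W -> y \notin W ->
  exists u v, [/\ u \in W, v \notin W & e u v].
Proof.
case/connectP => p pth ->; elim: p x pth => [|z p IH] x /=.
  by move=> _ ->.
case/andP => exz pth xW; have [zW|zW] := boolP (z \in W).
  by apply: IH.
by move=> _; exists x, z.
Qed.

Lemma porbits_card1 (T : finType) (p : {perm T}) :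
  #|porbits p| = 1 -> forall x y, y \in porbit p x.
Proof.
move=> /eqP/cards1P [X HX] x y.
have orbX z : porbit p z = X by apply/set1P; rewrite -HX; apply: imset_f.
by rewrite (orbX x) -(orbX y) porbit_id.
Qed.

Lemma last_rev_belast (T : Type) (x : T) p : last (last x p) (rev (belast x p)) = x.
Proof.
have H : last x p :: rev (belast x p) = rev (x :: p) by rewrite [x :: p]lastI rev_rcons.
by rewrite -(last_cons x) H rev_cons last_rcons.
Qed.

Lemma head_filterP (T : eqType) (P : pred T) (l : seq T) d :
  has P l -> P (head d (filter P l)) && (head d (filter P l) \in l).
Proof.
rewrite has_filter; case E: (filter P l) => [|h r] //= _.
have : h \in filter P l by rewrite E mem_head.
by rewrite mem_filter.
Qed.

Lemma undup_map_const (T : eqType) (T' : Type) (c : T) (l : seq T') :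
  0 < size l -> undup [seq c | _ <- l] = [:: c].
Proof.
elim: l => [|x l IH] //= _; case: l IH => [|y l] //= IH.
by rewrite inE eqxx /= IH.
Qed.

Section OrbitsIn.
Variables (T : eqType) (l : seq T) (g : T -> T).

Lemma mem_orbits_in x : x \in l -> orbit_in l g x \in orbits_in l g.
Proof. by move=> xl; rewrite mem_undup; apply: map_f. Qed.

Lemma orbit_in_id x : x \in l -> x \in orbit_in l g x.
Proof.
move=> xl; rewrite mem_filter xl andbT.
by case: l xl => // y r _; rewrite /= mem_head.
Qed.

Lemma iter_mem_traject x : {in l, forall y, g y \in l} -> x \in l ->
  forall i, iter i g x \in traject g x (size l).
Proof.
move=> gl xl.
have all_in i : iter i g x \in l by elim: i => // i IH; rewrite iterS gl.
case Hl: (size l) => [|n]; first by case: l Hl xl.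
have [U|NU] := boolP (uniq (traject g x n.+1)).
  have sub : {subset traject g x n.+1 <= l} by move=> y /trajectP [i _ ->].
  have sz : size l <= size (traject g x n.+1) by rewrite size_traject Hl.
  have [_ eqs] := uniq_min_size U sub sz.
  by apply/loopingP; rewrite /looping eqs; exact: all_in.
move: NU; rewrite looping_uniq negbK => /loopingP L i.
by rewrite trajectSr mem_rcons in_cons L orbT.
Qed.

Lemma orbits_in_full : 0 < size l -> {in l, forall x, orbit_in l g x = l} ->
  orbits_in l g = [:: l].
Proof.
move=> l_gt0 full; rewrite /orbits_in (eq_in_map _ (fun=> l) l).1 //.
exact: undup_map_const.
Qed.

Lemma orbits_in_single O : orbits_in l g = [:: O] -> O = l.
Proof.
move=> E.
have orbO x : x \in l -> orbit_in l g x = O.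
  by move=> xl; have := mem_orbits_in xl; rewrite E inE => /eqP.
have [x0 x0l] : exists x0, x0 \in l.
  by case: l E {orbO} => [|x0 r] //; exists x0; rewrite mem_head.
rewrite -(orbO x0 x0l); apply/all_filterP/allP => y yl.
by have := orbit_in_id yl; rewrite orbO // -(orbO x0 x0l) mem_filter => /andP[].
Qed.

End OrbitsIn.

Section GentleQuiver.
Variables (V A : finType) (s t : A -> V) (R : rel A) (sg tu : A -> bool).
Hypothesis gentleR : gentle s t R.
Hypothesis signsR : sign_convention s t R sg tu.

Lemma R_match a b : R a b -> s a = t b.
Proof. by case: gentleR => _ [H _ _ _ _]; apply: H. Qed.

Lemma out_inj a b : s a = s b -> sg a = sg b -> a = b.
Proof.
case: signsR => H _ _ e1 e2; apply/eqP; apply: contraTT (eqxx (sg a)) => ne.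
by rewrite {2}e2; apply: H.
Qed.

Lemma in_inj a b : t a = t b -> tu a = tu b -> a = b.
Proof.
case: signsR => _ H _ e1 e2; apply/eqP; apply: contraTT (eqxx (tu a)) => ne.
by rewrite {2}e2; apply: H.
Qed.

Lemma relE a b : R a b = (s a == t b) && (sg a == tu b).
Proof.
case: signsR => _ _ H; apply/idP/andP => [r | [/eqP e1 /eqP e2]].
  by have e := R_match r; split; apply/eqP => //; exact/(H _ _ e).
exact/(H _ _ e1).
Qed.

(* A slot (x, true, e) is the place of an arrow starting at x with sigma = e,
   a slot (x, false, e) that of an arrow ending at x with tau = e. *)
Definition slot := (V * bool * bool)%type.

Definition out_arrow (S : {set A}) (x : V) (e : bool) : option A :=
  [pick a in S | (s a == x) && (sg a == e)].
Definition in_arrow (S : {set A}) (x : V) (e : bool) : option A :=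
  [pick a in S | (t a == x) && (tu a == e)].

Lemma out_arrow_self (S : {set A}) a : a \in S -> out_arrow S (s a) (sg a) = Some a.
Proof.
move=> aS; rewrite /out_arrow; case: pickP => [b /and3P[bS /eqP e1 /eqP e2]|/(_ a)].
  by rewrite (out_inj e1 e2).
by rewrite aS !eqxx.
Qed.

Lemma out_arrow_Some (S : {set A}) x e a :
  out_arrow S x e = Some a -> [/\ a \in S, s a = x & sg a = e].
Proof. by rewrite /out_arrow; case: pickP => // b /and3P[bS /eqP <- /eqP <-] [<-]. Qed.

Lemma in_arrow_self (S : {set A}) a : a \in S -> in_arrow S (t a) (tu a) = Some a.
Proof.
move=> aS; rewrite /in_arrow; case: pickP => [b /and3P[bS /eqP e1 /eqP e2]|/(_ a)].
  by rewrite (in_inj e1 e2).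
by rewrite aS !eqxx.
Qed.

Lemma in_arrow_Some (S : {set A}) x e a :
  in_arrow S x e = Some a -> [/\ a \in S, t a = x & tu a = e].
Proof. by rewrite /in_arrow; case: pickP => // b /and3P[bS /eqP <- /eqP <-] [<-]. Qed.

Definition match_slot (S : {set A}) (z : slot) : slot :=
  let: (x, io, e) := z in
  if io then (if out_arrow S x e is Some a then (t a, false, tu a) else z)
  else (if in_arrow S x e is Some b then (s b, true, sg b) else z).

Definition turn (z : slot) : slot :=
  let: (x, io, e) := z in if io then (x, false, e) else (x, true, ~~ e).

Lemma match_slotK (S : {set A}) : involutive (match_slot S).
Proof.
move=> [[x [|]] e] /=.
  case E: (out_arrow S x e) => [a|] /=; last by rewrite E.
  by case/out_arrow_Some: E => aS <- <-; rewrite in_arrow_self.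
case E: (in_arrow S x e) => [a|] /=; last by rewrite E.
by case/in_arrow_Some: E => aS <- <-; rewrite out_arrow_self.
Qed.

Lemma turn_inj : injective turn.
Proof.
move=> [[x io] e] [[x' io'] e'].
by case: io; case: io' => //= -[-> E]; rewrite ?E ?(negb_inj E).
Qed.

Lemma turn_match_inj (S : {set A}) : injective (fun z => turn (match_slot S z)).
Proof. by move=> z z' /turn_inj /(can_inj (match_slotK S)). Qed.

Definition rho (S : {set A}) : {perm slot} := perm (@turn_match_inj S).

Lemma rhoE (S : {set A}) z : rho S z = turn (match_slot S z).
Proof. by rewrite permE. Qed.

Definition out_slot (a : A) : slot := (s a, true, sg a).
Definition in_slot (a : A) : slot := (t a, false, tu a).

Lemma rho_setU1 (S : {set A}) al : al \notin S ->
  rho (al |: S) = (tperm (out_slot al) (in_slot al) * rho S)%g.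
Proof.
move=> alS; apply/permP => z; rewrite permM !rhoE; congr turn.
have fix_in : match_slot S (in_slot al) = in_slot al.
  rewrite /= /in_slot; case E: in_arrow => [b|] //.
  by case/in_arrow_Some: E => bS e1 e2; move: alS; rewrite -(in_inj e1 e2) bS.
have fix_out : match_slot S (out_slot al) = out_slot al.
  rewrite /= /out_slot; case E: out_arrow => [b|] //.
  by case/out_arrow_Some: E => bS e1 e2; move: alS; rewrite -(out_inj e1 e2) bS.
case: tpermP => [->|->|zO zI].
- by rewrite fix_in /= out_arrow_self // setU11.
- by rewrite fix_out /= in_arrow_self // setU11.
move: z zO zI => [[x [|]] e] zO zI /=;
  congr (if _ is Some a then _ else _); apply: eq_pick => a /=;
  rewrite in_setU1; have [->|//] := eqVneq a al;
  rewrite (negbTE alS) ?eqxx /=; apply/negbTE/negP => /andP[/eqP ex /eqP es].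
  by case: zO; rewrite /out_slot ex es.
by case: zI; rewrite /in_slot ex es.
Qed.

Definition vertex_slots (v : V) : {set slot} := [set z : slot | z.1.1 == v].

Lemma porbit_rho_vertex (S : {set A}) z :
  (forall a, a \in S -> (s a != z.1.1) && (t a != z.1.1)) ->
  porbit (rho S) z \subset vertex_slots z.1.1.
Proof.
move=> away; apply/subsetP => y /porbitP [i ->]; rewrite inE permX; apply/eqP.
elim: i => [|i IH] //; rewrite iterS.
move: (iter i _ z) IH => [[x io] e] /= ->; rewrite rhoE /=; case: io.
  case E: out_arrow => [a|] //; case/out_arrow_Some: E => aS ex _.
  by move: (away _ aS); rewrite ex eqxx.
case E: in_arrow => [a|] //; case/in_arrow_Some: E => aS ex _.
by move: (away _ aS); rewrite ex eqxx andbF.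
Qed.

Lemma rho_set0E z : rho set0 z = turn z.
Proof.
rewrite rhoE; case: z => [[x [|]] e] /=.
  by case E: out_arrow => [a|] //; case/out_arrow_Some: E; rewrite inE.
by case E: in_arrow => [a|] //; case/in_arrow_Some: E; rewrite inE.
Qed.

Lemma porbit_rho_set0 z : porbit (rho set0) z = vertex_slots z.1.1.
Proof.
apply/eqP; rewrite eqEsubset porbit_rho_vertex ?andbT; last by move=> a; rewrite inE.
have turn_orbit y : y \in porbit (rho set0) z -> turn y \in porbit (rho set0) z.
  move=> yz; rewrite -rho_set0E; move: yz; rewrite -!eq_porbit_mem => /eqP <-.
  by apply/eqP; rewrite -[rho set0 y]/((rho set0 ^+ 1)%g y) porbit_perm.
apply/subsetP => y; rewrite inE => /eqP.
have z0 := porbit_id (rho set0) z.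
move: z z0 turn_orbit y => [[x io] e] z0 turn_orbit [[x' io'] e'] /= ->.
have z1 := turn_orbit _ z0; have z2 := turn_orbit _ z1; have z3 := turn_orbit _ z2.
by clear turn_orbit; move: z0 z1 z2 z3; case: io; case: io'; case: e; case: e'.
Qed.

Lemma card_porbits_rho_set0 : #|porbits (rho set0)| = #|V|.
Proof.
have -> : porbits (rho set0) = [set vertex_slots v | v : V].
  apply/setP => X; apply/imsetP/imsetP => -[z _ ->].
    by exists z.1.1 => //; rewrite porbit_rho_set0.
  by exists (z, true, true) => //; rewrite porbit_rho_set0.
rewrite card_imset //= => u v E.
have : (u, true, true) \in vertex_slots v by rewrite -E inE.
by rewrite inE => /eqP.
Qed.

Lemma spanning_subtree k : connected_quiver s t -> k < #|V| ->
  exists (W : {set V}) (S : {set A}),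
    [/\ #|W| = k.+1, #|S| = k, (forall a, a \in S -> (s a \in W) && (t a \in W))
      & #|porbits (rho S)| + k = #|V|].
Proof.
case=> V_gt0 Vconn; elim: k => [_|k IH lt_kV].
  case/card_gt0P: V_gt0 => v0 _; exists [set v0], set0.
  split; [by rewrite cards1 | by rewrite cards0 | by move=> a; rewrite in_set0 |].
  by rewrite addn0 card_porbits_rho_set0.
have [W [S [cW cS WS cP]]] := IH (ltnW lt_kV).
have [v0 v0W] : exists v0, v0 \notin W.
  apply/existsP; rewrite -negb_forall; apply/negP => /forallP H.
  have : #|[set: V]| <= #|W| by apply/subset_leq_card/subsetP => x _; exact: H.
  by rewrite cardsT cW leqNgt lt_kV.
have [u0 u0W] : exists u0, u0 \in W by apply/card_gt0P; rewrite cW.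
have [u [v [uW vW /existsP [al Hal]]]] := connect_exit (Vconn u0 v0) u0W v0W.
have alS : al \notin S.
  apply/negP => /WS /andP[sW tW].
  by case/orP: Hal => /andP[/eqP e1 /eqP e2]; move: vW; rewrite -?e1 -?e2 ?sW ?tW.
have vS a : a \in S -> (s a != v) && (t a != v).
  move=> /WS /andP[sW tW]; apply/andP; split; apply/negP => /eqP e;
    by move: vW; rewrite -e ?sW ?tW.
have uv : u != v by apply: contraNneq vW => <-.
exists (v |: W), (al |: S); split.
- by rewrite cardsU1 vW cW.
- by rewrite cardsU1 alS cS.
- move=> a; rewrite in_setU1 => /orP[/eqP ->|/WS /andP[sW tW]]; last first.
    by rewrite !in_setU1 sW tW !orbT.
  by case/orP: Hal => /andP[/eqP -> /eqP ->]; rewrite !in_setU1 eqxx uW ?orbT.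
(* [al] joins the vertex v, untouched by S, to the rest: its two slots lie
   in different rho S-cycles, so the transposition merges them. *)
have apart : out_slot al \notin porbit (rho S) (in_slot al).
  case/orP: Hal => /andP[/eqP e1 /eqP e2].
    apply/negP => /(subsetP (porbit_rho_vertex _)) H.
    have : out_slot al \in vertex_slots (in_slot al).1.1 by apply: H; rewrite /= e2.
    by rewrite inE /= e1 e2 (negbTE uv).
  rewrite porbit_sym; apply/negP => /(subsetP (porbit_rho_vertex _)) H.
  have : in_slot al \in vertex_slots (out_slot al).1.1 by apply: H; rewrite /= e1.
  by rewrite inE /= e1 e2 (negbTE uv).
have := porbits_mul_tperm (rho S) (out_slot al) (in_slot al).
have ne : out_slot al != in_slot al by apply/eqP => /(congr1 (fun z => z.1.2)).
rewrite /= apart ne -rho_setU1 //= => E.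
rewrite -cP addnS -addSn; move: E => /=; rewrite !addnS ?addn0 ?addn1 => -[->] //.
Qed.

Local Notation rT := (rho [set: A]).

Lemma tree_rho_transitive : #|V| = #|A| + 1 -> forall z z', z' \in porbit rT z.
Proof.
move=> tree; apply: porbits_card1.
have [|W [S [_ cS _ cP]]] := spanning_subtree (k := #|A|) (proj1 gentleR).
  by rewrite tree addn1.
have -> : [set: A] = S by apply/eqP; rewrite eq_sym eqEcard subsetT cardsT cS leqnn.
by move: cP; rewrite tree addnC => /addnI.
Qed.

Local Notation TT := [set: A].

Definition anext a := in_arrow TT (s a) (sg a).
Definition aprev a := out_arrow TT (t a) (tu a).
Definition pnext a := in_arrow TT (s a) (~~ sg a).
Definition pprev a := out_arrow TT (t a) (~~ tu a).

Lemma in_arrowT_eq_Some x e b : (in_arrow TT x e == Some b) = (t b == x) && (tu b == e).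
Proof.
apply/eqP/andP => [/in_arrow_Some [_ -> ->] //|[/eqP <- /eqP <-]].
by rewrite in_arrow_self ?in_setT.
Qed.

Lemma out_arrowT_eq_Some x e b : (out_arrow TT x e == Some b) = (s b == x) && (sg b == e).
Proof.
apply/eqP/andP => [/out_arrow_Some [_ -> ->] //|[/eqP <- /eqP <-]].
by rewrite out_arrow_self ?in_setT.
Qed.

Lemma out_arrowT_eq_None x e :
  (out_arrow TT x e == None) = ~~ [exists a, (s a == x) && (sg a == e)].
Proof.
rewrite /out_arrow; case: pickP => [a /andP[_ H]|H] /=.
  by apply/esym/negbF/existsP; exists a.
by apply/esym/negP => /existsP [a Ha]; move: (H a); rewrite in_setT Ha.
Qed.

Lemma in_arrowT_eq_None x e :
  (in_arrow TT x e == None) = ~~ [exists a, (t a == x) && (tu a == e)].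
Proof.
rewrite /in_arrow; case: pickP => [a /andP[_ H]|H] /=.
  by apply/esym/negbF/existsP; exists a.
by apply/esym/negP => /existsP [a Ha]; move: (H a); rewrite in_setT Ha.
Qed.

Lemma antipath_stepE a b : ((s a == t b) && R a b) = (anext a == Some b).
Proof. by rewrite /anext in_arrowT_eq_Some relE andbA andbb eq_sym [tu b == _]eq_sym. Qed.

Lemma permitted_stepE a b : ((s a == t b) && ~~ R a b) = (pnext a == Some b).
Proof.
rewrite /pnext in_arrowT_eq_Some relE eq_sym; case: (t b == s a) => //=.
by case: (sg a); case: (tu b).
Qed.

Lemma anext_aprev a b : (anext a == Some b) = (aprev b == Some a).
Proof. by rewrite /anext /aprev in_arrowT_eq_Some out_arrowT_eq_Some eq_sym [tu b == _]eq_sym. Qed.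

Lemma pnext_pprev a b : (pnext a == Some b) = (pprev b == Some a).
Proof.
rewrite /pnext /pprev in_arrowT_eq_Some out_arrowT_eq_Some eq_sym.
by case: (s a == t b) => //=; case: (sg a); case: (tu b).
Qed.

Lemma anext_inj x y z : anext x = Some z -> anext y = Some z -> x = y.
Proof.
move=> /in_arrow_Some [_ e1 e2] /in_arrow_Some [_ e3 e4].
by apply: out_inj; rewrite -?e1 -?e2.
Qed.

Lemma aprev_inj x y z : aprev x = Some z -> aprev y = Some z -> x = y.
Proof.
move=> /out_arrow_Some [_ e1 e2] /out_arrow_Some [_ e3 e4].
by apply: in_inj; rewrite -?e1 -?e2.
Qed.

Lemma pprev_inj x y z : pprev x = Some z -> pprev y = Some z -> x = y.
Proof.
move=> /out_arrow_Some [_ e1 e2] /out_arrow_Some [_ e3 e4].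
by apply: in_inj; [rewrite -e1 -e3 | apply: negb_inj; rewrite -e2 -e4].
Qed.

Local Notation maxN := (max_antipath s t R sg tu).
Local Notation maxM := (max_permitted s t R sg tu).

Lemma max_antipath_inr a l :
  maxN (inr (a, l)) = [&& opath anext a l, aprev a == None & anext (last a l) == None].
Proof.
by rewrite /max_antipath /= (eq_path antipath_stepE) /aprev /anext
  out_arrowT_eq_None in_arrowT_eq_None.
Qed.

Lemma max_antipath_inl x e1 e2 :
  maxN (inl (x, e1, e2)) = [&& e2 == e1, out_arrow TT x e2 == None & in_arrow TT x e1 == None].
Proof. by rewrite /max_antipath /= out_arrowT_eq_None in_arrowT_eq_None. Qed.

Lemma max_permitted_inr a l :
  maxM (inr (a, l)) = [&& opath pnext a l, pprev a == None & pnext (last a l) == None].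
Proof.
by rewrite /max_permitted /= (eq_path permitted_stepE) /pprev /pnext
  out_arrowT_eq_None in_arrowT_eq_None.
Qed.

Lemma max_permitted_inl x e1 e2 : maxM (inl (x, e1, e2)) =
  [&& e2 == ~~ e1, out_arrow TT x (~~ e2) == None & in_arrow TT x (~~ e1) == None].
Proof. by rewrite /max_permitted /= out_arrowT_eq_None in_arrowT_eq_None. Qed.

Lemma max_antipath_end_inj w w' : maxN w -> maxN w' ->
  (gt t w, gtu tu w) = (gt t w', gtu tu w') -> w = w'.
Proof.
case: w => [[[x e1] e2]|[a l]]; case: w' => [[[x' e1'] e2']|[a' l']] /=.
- by rewrite !max_antipath_inl => /and3P[/eqP -> _ _] /and3P[/eqP -> _ _] [-> ->].
- rewrite max_antipath_inl => /and3P[/eqP -> _ H] _ [ex ee]; subst x e1.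
  by rewrite in_arrow_self ?in_setT in H.
- rewrite max_antipath_inl => _ /and3P[/eqP -> _ H] [ex ee]; subst x' e1'.
  by rewrite in_arrow_self ?in_setT in H.
rewrite !max_antipath_inr => /and3P[p _ /eqP n] /and3P[p' _ /eqP n'] [e1 e2].
have aa := in_inj e1 e2; subst a'.
by rewrite (opath_maximal_unique p p' n n').
Qed.

Lemma max_permitted_end_inj w w' : maxM w -> maxM w' ->
  (gt t w, gtu tu w) = (gt t w', gtu tu w') -> w = w'.
Proof.
case: w => [[[x e1] e2]|[a l]]; case: w' => [[[x' e1'] e2']|[a' l']] /=.
- rewrite !max_permitted_inl => /and3P[/eqP -> _ _] /and3P[/eqP -> _ _] [-> E].
  by rewrite (negb_inj E).
- rewrite max_permitted_inl => /and3P[/eqP -> _ H] _ [ex ee]; subst x.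
  by rewrite ee in_arrow_self ?in_setT in H.
- rewrite max_permitted_inl => _ /and3P[/eqP -> _ H] [ex ee]; subst x'.
  by rewrite -ee in_arrow_self ?in_setT in H.
rewrite !max_permitted_inr => /and3P[p _ /eqP n] /and3P[p' _ /eqP n'] [e1 e2].
have aa := in_inj e1 e2; subst a'.
by rewrite (opath_maximal_unique p p' n n').
Qed.

Local Notation NL := (Nlist s t R sg tu).
Local Notation ML := (Mlist s t R sg tu).

Lemma mem_Nlist w : (w \in NL) = maxN w.
Proof. by apply: mem_fset_set_inj => w1 w2; apply: max_antipath_end_inj. Qed.

Lemma mem_Mlist w : (w \in ML) = maxM w.
Proof. by apply: mem_fset_set_inj => w1 w2; apply: max_permitted_end_inj. Qed.

Lemma max_antipath_src w : maxN w -> in_arrow TT (gs s w) (gsg sg w) = None.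
Proof.
case: w => [[[x e1] e2]|[a l]]; first by rewrite max_antipath_inl => /and3P[_ _ /eqP].
by rewrite max_antipath_inr => /and3P[_ _ /eqP].
Qed.

Lemma max_antipath_tgt w : maxN w -> out_arrow TT (gt t w) (gtu tu w) = None.
Proof.
case: w => [[[x e1] e2]|[a l]]; first by rewrite max_antipath_inl => /and3P[_ /eqP ? _].
by rewrite max_antipath_inr => /and3P[_ /eqP ? _].
Qed.

Lemma max_permitted_tgt w : maxM w -> out_arrow TT (gt t w) (~~ gtu tu w) = None.
Proof.
case: w => [[[x e1] e2]|[a l]]; first by rewrite max_permitted_inl => /and3P[_ /eqP ? _].
by rewrite max_permitted_inr => /and3P[_ /eqP ? _].
Qed.

Lemma max_antipath_with_end y e : out_arrow TT y e = None ->
  exists w, maxN w /\ (gt t w, gtu tu w) = (y, e).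
Proof.
move=> no_out; case E: (in_arrow TT y e) => [b|]; last first.
  by exists (inl (y, e, e)); rewrite max_antipath_inl eqxx no_out E.
case/in_arrow_Some: E => _ ey ee.
have no_pre x : anext x != Some b by rewrite anext_aprev /aprev ey ee no_out.
have [l [p n]] := opath_maximal_exists anext_inj no_pre.
by exists (inr (b, l)); rewrite max_antipath_inr p /aprev ey ee no_out n /= ey ee.
Qed.

Lemma max_permitted_with_start x e : in_arrow TT x (~~ e) = None ->
  exists w, maxM w /\ (gs s w, gsg sg w) = (x, e).
Proof.
move=> no_in; case E: (out_arrow TT x e) => [a|]; last first.
  by exists (inl (x, e, ~~ e)); rewrite max_permitted_inl eqxx negbK E no_in.
case/out_arrow_Some: E => _ ex ee.
have no_pre y : pprev y != Some a by rewrite -pnext_pprev /pnext ex ee no_in.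
(* the maximal permitted path is found backwards, along pprev *)
have [l [p n]] := opath_maximal_exists pprev_inj no_pre.
exists (inr (last a l, rev (belast a l))).
rewrite max_permitted_inr /= last_rev_belast n [pnext a]/pnext ex ee no_in !eqxx andbT.
split => //; rewrite rev_path andbT; move: p; apply: sub_path => u v /=.
by rewrite pnext_pprev.
Qed.

Lemma psiP w : maxN w -> [/\ maxM (psi s t R sg tu w),
  gs s (psi s t R sg tu w) = gs s w & gsg sg (psi s t R sg tu w) = ~~ gsg sg w].
Proof.
move=> Nw.
have no_in : in_arrow TT (gs s w) (~~ ~~ gsg sg w) = None by rewrite negbK max_antipath_src.
have [o [Mo [e1 e2]]] := max_permitted_with_start no_in.
have : has (fun w' => (gs s w' == gs s w) && (gsg sg w' == ~~ gsg sg w)) ML.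
  by apply/hasP; exists o; rewrite ?mem_Mlist ?e1 ?e2 ?eqxx.
move/(head_filterP w); rewrite /psi => /andP[/andP[/eqP -> /eqP ->]].
by rewrite mem_Mlist.
Qed.

Lemma phiP o : maxM o -> [/\ maxN (phi s t R sg tu o),
  gt t (phi s t R sg tu o) = gt t o & gtu tu (phi s t R sg tu o) = ~~ gtu tu o].
Proof.
move=> Mo; have [w [Nw [e1 e2]]] := max_antipath_with_end (max_permitted_tgt Mo).
have : has (fun w' => (gt t w' == gt t o) && (gtu tu w' == ~~ gtu tu o)) NL.
  by apply/hasP; exists w; rewrite ?mem_Nlist ?e1 ?e2 ?eqxx.
move/(head_filterP o); rewrite /phi => /andP[/andP[/eqP -> /eqP ->]].
by rewrite mem_Nlist.
Qed.

Local Notation PhiT := (Phi s t R sg tu).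

Lemma Phi_max_antipath w : maxN w -> maxN (PhiT w).
Proof. by move=> /psiP [Mo _ _]; have [] := phiP Mo. Qed.

Lemma rho_out x e : rT (x, true, e) =
  if out_arrow TT x e is Some a then (t a, true, ~~ tu a) else (x, false, e).
Proof. by rewrite rhoE /=; case: out_arrow. Qed.

Lemma rho_in x e : rT (x, false, e) =
  if in_arrow TT x e is Some b then (s b, false, sg b) else (x, true, ~~ e).
Proof. by rewrite rhoE /=; case: in_arrow. Qed.

Lemma rho_out_slot c : rT (out_slot c) = (t c, true, ~~ tu c).
Proof. by rewrite rho_out out_arrow_self ?in_setT. Qed.

Lemma rho_in_slot c : rT (in_slot c) = (s c, false, sg c).
Proof. by rewrite rho_in in_arrow_self ?in_setT. Qed.

Lemma rho_iter_antipath b l : opath anext b l ->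
  (forall j, j <= size l -> exists c, iter j rT (s b, false, sg b) = (s c, false, sg c)) /\
  iter (size l) rT (s b, false, sg b) = (s (last b l), false, sg (last b l)).
Proof.
elim: l b => [|b' l IH] b.
  by move=> _; split => // -[|j] // _; exists b.
move=> /andP[/eqP E p]; have [IH1 IH2] := IH b' p.
have step : rT (s b, false, sg b) = (s b', false, sg b') by rewrite rho_in -/(anext b) E.
split; last by rewrite iterSr step.
by move=> [|j] Hj; [exists b | rewrite iterSr step; apply: IH1].
Qed.

Lemma rho_iter_permitted a l : opath pnext a l ->
  (forall j, j <= (size l).+1 ->
     (iter j rT (s (last a l), true, sg (last a l))).1.2 = true) /\
  iter (size l).+1 rT (s (last a l), true, sg (last a l)) = (t a, true, ~~ tu a).
Proof.
elim: l a => [|b l IH] a.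
  by move=> _; rewrite /= rho_out_slot; split => // -[|[|j]] //= _; rewrite rho_out_slot.
move=> /andP[E p]; have [IH1 IH2] := IH b p.
move: E; rewrite pnext_pprev => /eqP /out_arrow_Some [_ e1 e2].
have last_step : iter (size l).+2 rT (s (last b l), true, sg (last b l)) = (t a, true, ~~ tu a).
  by rewrite iterS IH2 -e1 -e2 rho_out_slot.
split => // j Hj; have [Hj'|Hj'] := leqP j (size l).+1; first exact: IH1.
have -> : j = (size l).+2 by apply/eqP; rewrite eqn_leq Hj Hj'.
by change (last a (b :: l)) with (last b l); rewrite last_step.
Qed.

Definition end_slot (w : gpath V A) : slot := (gt t w, false, gtu tu w).
Definition start_slot (w : gpath V A) : slot := (gs s w, false, gsg sg w).
(* The end slots of the maximal antipaths are exactly the terminal slots. *)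
Definition terminal_slot (z : slot) := ~~ z.1.2 && (out_arrow TT z.1.1 z.2 == None).

Lemma rho_iter_max_antipath w : maxN w ->
  (forall j, 0 < j <= glen w -> ~~ terminal_slot (iter j rT (end_slot w))) /\
  iter (glen w) rT (end_slot w) = start_slot w.
Proof.
case: w => [[[x e1] e2]|[b l]].
  by rewrite max_antipath_inl /end_slot /start_slot /= => /and3P[/eqP -> _ _]; split => // -[].
rewrite max_antipath_inr => /and3P[p _ _]; have [W1 W2] := rho_iter_antipath p.
rewrite /end_slot /start_slot; change (glen (inr (b, l))) with (size l).+1.
split; last by rewrite iterSr rho_in_slot.
move=> [|j] // /andP[_ Hj]; rewrite iterSr rho_in_slot.
have [c ->] := W1 j Hj.
by rewrite /terminal_slot /= out_arrow_self ?in_setT.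
Qed.

Lemma rho_iter_max_permitted o : maxM o ->
  (forall j, j <= glen o -> (iter j rT (gs s o, true, gsg sg o)).1.2 = true) /\
  iter (glen o).+1 rT (gs s o, true, gsg sg o) = (gt t o, false, ~~ gtu tu o).
Proof.
case: o => [[[x e1] e2]|[a l]].
  rewrite max_permitted_inl /= => /and3P[/eqP -> /eqP H _]; split; first by case.
  by rewrite rho_out; move: H; rewrite !negbK => ->.
rewrite max_permitted_inr => /and3P[p /eqP n _]; have [W1 W2] := rho_iter_permitted p.
change (glen (inr (a, l))) with (size l).+1.
by split => //; rewrite iterS W2 rho_out -/(pprev a) n.
Qed.

Lemma rho_iter_Phi w : maxN w -> exists k, [/\ 0 < k,
  iter k rT (end_slot w) = end_slot (PhiT w) &
  forall j, 0 < j < k -> ~~ terminal_slot (iter j rT (end_slot w))].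
Proof.
move=> Nw; have [W1 W2] := rho_iter_max_antipath Nw.
have [Mo e1 e2] := psiP Nw.
set o := psi s t R sg tu w in Mo e1 e2.
have [V1 V2] := rho_iter_max_permitted Mo.
have [_ f1 f2] := phiP Mo.
have turn_back : rT (start_slot w) = (gs s o, true, gsg sg o).
  by rewrite /start_slot rho_in max_antipath_src // e1 e2.
exists ((glen o).+2 + glen w); split => //.
  by rewrite iterD W2 iterSr turn_back V2 /end_slot /Phi f1 f2.
move=> j /andP[j0 jk]; have [jw|jw] := leqP j (glen w).
  by apply: W1; rewrite j0 jw.
rewrite -(subnK (ltnW jw)) iterD W2.
case E: (j - glen w) => [|i]; first by move: jw; rewrite -subn_gt0 E.
rewrite iterSr turn_back /terminal_slot V1 //.
by move: jk; rewrite -(subnK (ltnW jw)) E ltn_add2r ltnS.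
Qed.

Lemma end_slot_inj w w' : maxN w -> maxN w' -> end_slot w = end_slot w' -> w = w'.
Proof. by move=> Nw Nw' [e1 e2]; apply: max_antipath_end_inj => //; rewrite e1 e2. Qed.

Lemma end_slot_terminal w : maxN w -> terminal_slot (end_slot w).
Proof. by move=> Nw; rewrite /terminal_slot /end_slot /= max_antipath_tgt. Qed.

Lemma rho_iter_end_slot n j w w' : j <= n -> maxN w -> maxN w' ->
  iter j rT (end_slot w) = end_slot w' -> exists i, w' = iter i PhiT w.
Proof.
elim: n j w => [|n IH] [|j] w // jn Nw Nw' E; try by exists 0; apply: end_slot_inj.
have [k [k0 Ek Hk]] := rho_iter_Phi Nw.
have [jk|jk] := ltnP j.+1 k.
  by move: (Hk j.+1 (jk : 0 < j.+1 < k)); rewrite E end_slot_terminal.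
move: E; rewrite -(subnK jk) iterD Ek => E.
have [|i ->] := IH (j.+1 - k) (PhiT w) _ (Phi_max_antipath Nw) Nw' E.
  by rewrite leq_subLR (leq_trans jn) // -add1n leq_add2r.
by exists i.+1; rewrite iterSr.
Qed.

Lemma orbit_in_Phi_full : (forall z z', z' \in porbit rT z) ->
  {in NL, forall w, orbit_in NL PhiT w = NL}.
Proof.
move=> transitive w wN; apply/all_filterP/allP => y yN.
have Nw : maxN w by rewrite -mem_Nlist.
have Ny : maxN y by rewrite -mem_Nlist.
have /porbitP [j Ej] := transitive (end_slot w) (end_slot y).
have [i ->] := @rho_iter_end_slot j j w y (leqnn j) Nw Ny (esym (etrans Ej (permX _ _ _))).
by apply: iter_mem_traject => // u; rewrite !mem_Nlist; exact: Phi_max_antipath.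
Qed.

Lemma aprev_chain_start k al : iter k (obind aprev) (Some al) = None ->
  exists a1 j, aprev a1 = None /\ iter j (obind anext) (Some a1) = Some al.
Proof.
elim: k al => [|k IH] al //; rewrite iterSr /=.
case E: (aprev al) => [b|] H; last by exists al, 0.
have [a1 [j [n Ej]]] := IH b H; exists a1, j.+1; split => //.
by rewrite iterS Ej /=; apply/eqP; rewrite anext_aprev E.
Qed.

(* An arrow of C lies on no maximal antipath, so going backwards along
   antipaths from it never stops. *)
Lemma inC_aprev_total al : inC s t R sg tu al ->
  forall k, iter k (obind aprev) (Some al) != None.
Proof.
move=> C k; apply/negP => /eqP /aprev_chain_start [a1 [j [n Ej]]].
have no_pre x : anext x != Some a1 by rewrite anext_aprev n.
have [l [p nl]] := opath_maximal_exists anext_inj no_pre.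
have wN : inr (a1, l) \in NL by rewrite mem_Nlist max_antipath_inr p n nl !eqxx.
move: C; rewrite /inC => /hasPn /(_ _ wN) /=.
by rewrite (opath_iter_mem p nl Ej).
Qed.

Lemma aprev_total_anext b : (forall k, iter k (obind aprev) (Some b) != None) ->
  exists c, anext b = Some c /\ forall k, iter k (obind aprev) (Some c) != None.
Proof.
move=> total; have [d] := iter_obind_periodic aprev_inj total.
rewrite iterS; case Ec: (iter d (obind aprev) (Some b)) => [c|] //= Pc.
exists c; split; first by apply/eqP; rewrite anext_aprev Pc.
by move=> k; rewrite -Ec -iterD; apply: total.
Qed.

(* The rho-cycle through the in-slot at the source of an arrow of C consists
   of in-slots only. *)
Lemma Clist_nil_of_transitive : (forall z z', z' \in porbit rT z) ->
  Clist s t R sg tu = [::].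
Proof.
move=> transitive; case E: (Clist s t R sg tu) => [|al r] //.
have : al \in Clist s t R sg tu by rewrite E mem_head.
rewrite mem_filter => /andP[C _].
pose P z := exists b,
  (forall k, iter k (obind aprev) (Some b) != None) /\ z = (s b, false, sg b).
have P_rho z : P z -> P (rT z).
  move=> [b [nb ->]]; have [c [nc Hc]] := aprev_total_anext nb.
  by exists c; split => //; rewrite rho_in -/(anext b) nc.
have P_iter i : P (iter i rT (s al, false, sg al)).
  elim: i => [|i IH]; last by rewrite iterS; apply: P_rho.
  by exists al; split => //; apply: inC_aprev_total.
have /porbitP [i Ei] := transitive (s al, false, sg al) (s al, true, sg al).
have [b [_ Eb]] := P_iter i.
by move: Eb; rewrite -permX -Ei => -[].
Qed.

Lemma uniq_max_antipath w : maxN w -> uniq (garrows w).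
Proof.
case: w => [[[x e1] e2]|[a l]] //; rewrite max_antipath_inr => /and3P[p _ /eqP n].
exact: opath_maximal_uniq p n.
Qed.

Lemma max_antipath_disjoint w w' al : maxN w -> maxN w' ->
  al \in garrows w -> al \in garrows w' -> w = w'.
Proof.
case: w => [[[x e1] e2]|[a l]] //; case: w' => [[[x' e1'] e2']|[a' l']] //.
rewrite !max_antipath_inr => /and3P[p /eqP pa /eqP n] /and3P[p' /eqP pa' /eqP n'] /= H H'.
have [l2 [p2 e2]] := opath_suffix p H.
have [l2' [p2' e2']] := opath_suffix p' H'.
have ll : last a l = last a' l'.
  rewrite -e2 -e2'; congr last; apply: opath_maximal_unique p2 p2' _ _; by rewrite ?e2 ?e2'.
have back b r : opath anext b r -> opath aprev (last b r) (rev (belast b r)).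
  by move=> q; rewrite rev_path; move: q; apply: sub_path => u v /=; rewrite anext_aprev.
have q := back _ _ p; have q' := back _ _ p'.
rewrite ll in q.
have pa2 : aprev (last (last a' l') (rev (belast a l))) = None.
  by rewrite -ll last_rev_belast.
have pa2' : aprev (last (last a' l') (rev (belast a' l'))) = None.
  by rewrite last_rev_belast.
have /(inv_inj (@revK _)) bb := opath_maximal_unique q q' pa2 pa2'.
have : a :: l = a' :: l' by rewrite [a :: l]lastI bb ll -lastI.
by case=> -> ->.
Qed.

Lemma uniq_flatten_arrows ws : uniq ws -> {in ws, forall w, maxN w} ->
  uniq (flatten (map (@garrows V A) ws)).
Proof.
elim: ws => [|w ws IH] //= /andP[w_ws U] maxws.
have maxws' : {in ws, forall w, maxN w}.
  by move=> u uw; apply: maxws; rewrite in_cons uw orbT.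
rewrite cat_uniq (IH U maxws') andbT uniq_max_antipath ?maxws ?mem_head //=.
apply/hasPn => al /flattenP [r /mapP [w' w'ws ->]] al_w'; apply/negP => al_w.
have ww := max_antipath_disjoint (maxws _ (mem_head _ _)) (maxws' _ w'ws) al_w al_w'.
by move: w_ws; rewrite ww w'ws.
Qed.

(* Outside C, every arrow lies on exactly one maximal antipath. *)
Lemma sumn_glen_Nlist : Clist s t R sg tu = [::] -> sumn (map (@glen V A) NL) = #|A|.
Proof.
move=> C0.
have -> : map (@glen V A) NL = shape (map (@garrows V A) NL).
  by rewrite /shape -map_comp; apply: eq_map => -[[[x e1] e2]|[a l]].
rewrite -size_flatten.
have U := uniq_flatten_arrows (fset_uniq _) (fun w wN => etrans (esym (mem_Nlist w)) wN).
rewrite -(card_uniqP U); apply: eq_card => al.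
have : ~~ inC s t R sg tu al.
  apply/negP => C; have : al \in Clist s t R sg tu by rewrite mem_filter C mem_enum.
  by rewrite C0.
rewrite /inC negbK => /hasP [w wN H].
by rewrite inE; apply/flattenP; exists (garrows w) => //; apply: map_f.
Qed.

(* Maximal antipaths correspond to their end (t w, tau w), which ranges over
   the pairs (x, e) with no arrow starting at x with sigma = e. *)
Lemma size_Nlist : size NL + #|A| = 2 * #|V|.
Proof.
pose key (w : gpath V A) := (gt t w, gtu tu w).
pose free := [pred k : V * bool | out_arrow TT k.1 k.2 == None].
have U : uniq (map key NL).
  rewrite map_inj_in_uniq ?fset_uniq // => w w' wN w'N.
  by apply: max_antipath_end_inj; rewrite -mem_Nlist.
have size_free : size NL = #|free|.
  rewrite -(size_map key) -(card_uniqP U); apply: eq_card => k.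
  rewrite inE; apply/mapP/eqP => [[w wN ->]|H].
    by apply: max_antipath_tgt; rewrite -mem_Nlist.
  have [w [Nw kw]] := max_antipath_with_end H.
  by exists w; rewrite ?mem_Nlist // /key kw; case: k {H kw}.
have out_inj' : injective (fun a => (s a, sg a)) by move=> a b [e1 e2]; apply: out_inj.
have card_used : #|[predC free]| = #|A|.
  rewrite -(card_codom out_inj'); apply: eq_card => k; rewrite !inE.
  apply/idP/codomP => [H|[a ->]]; last by rewrite /= out_arrow_self ?in_setT.
  case E: (out_arrow TT k.1 k.2) H => [a|] // _.
  by case/out_arrow_Some: E => _ ex ee; exists a; rewrite ex ee; case: k {ex ee}.
by rewrite size_free -card_used cardC card_prod card_bool mulnC.
Qed.

Lemma AGf_Phi_orbit O : O \in orbits_in NL PhiT ->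
  0 < AGf s t R sg tu (size O) (sumn (map (@glen V A) O)).
Proof. by move=> OP; rewrite /AGf ltn_addr // -has_count; apply/hasP; exists O; rewrite ?eqxx. Qed.

Lemma AGf_Psi_orbit O : O \in orbits_in (Clist s t R sg tu) (Psi s t R sg tu) ->
  0 < AGf s t R sg tu 0 (size O).
Proof. by move=> OP; rewrite /AGf ltn_addl // -has_count; apply/hasP; exists O; rewrite ?eqxx. Qed.

Lemma AGf_tree : #|V| = #|A| + 1 -> AGf s t R sg tu =2 charpq #|A|.+2 #|A|.
Proof.
move=> tree; have transitive := tree_rho_transitive tree.
have C0 := Clist_nil_of_transitive transitive.
have size_NL : size NL = #|A|.+2 by move: size_Nlist; rewrite tree; lia.
have orbE : orbits_in NL PhiT = [:: NL].
  by apply: orbits_in_full; [rewrite size_NL | exact: orbit_in_Phi_full].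
move=> p q; rewrite /AGf orbE C0 /= sumn_glen_Nlist // size_NL /charpq !addn0.
by rewrite [p == _]eq_sym [q == _]eq_sym.
Qed.

Lemma tree_of_AGf p : AGf s t R sg tu =2 charpq p.+2 p -> #|V| = #|A| + 1.
Proof.
move=> f_pq.
have C0 : Clist s t R sg tu = [::].
  case E: (Clist s t R sg tu) => [|al r] //.
  have := AGf_Psi_orbit (mem_orbits_in (Psi s t R sg tu) (_ : al \in _)).
  by rewrite f_pq E mem_head => /(_ isT).
have orbP O : O \in orbits_in NL PhiT -> size O = p.+2 /\ sumn (map (@glen V A) O) = p.
  by move/AGf_Phi_orbit; rewrite f_pq /charpq; do 2 case: eqP => // ->.
have : size (orbits_in NL PhiT) = 1.
  move: (f_pq p.+2 p); rewrite /AGf C0 /charpq !eqxx /= addn0 => <-.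
  by rewrite -count_predT; apply: eq_in_count => O /orbP[-> ->]; rewrite !eqxx.
case E: (orbits_in _ _) => [|O [|]] // _.
have [size_O sumn_O] := orbP O ltac:(by rewrite E mem_head).
have OE := orbits_in_single E; subst O.
by move: size_Nlist (sumn_glen_Nlist C0); rewrite size_O sumn_O; lia.
Qed.

End GentleQuiver.

Theorem proposition3p4 (V A : finType) (s t : A -> V) (R : rel A)
    (sg tu : A -> bool) :
  gentle s t R -> sign_convention s t R sg tu ->
  (#|V| = #|A| + 1 <->
   exists p : nat, AGf s t R sg tu =2 charpq p.+2 p).
Proof.
move=> gentleR signsR; split=> [tree | [p f_pq]].
  by exists #|A|; apply: AGf_tree tree.
exact: tree_of_AGf f_pq.
Qed.
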